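(* Let $F$ be a field of characteristic not 2 or 3 and $E$ an étale cubic $F$-algebra. Let $v_{0,E}=(1,0,0,-1)\in V_E(F)$. Then \[\mathrm{Stab}_{M_E}(v_{0,E})=\Big\{\begin{pmatrix}\alpha&0\\0&\alpha^{-1}\end{pmatrix}:\alpha\in E^1\Big\}\rtimes\{1,w\}\cong E^1\rtimes\mathbb Z/2\mathbb Z,\qquad w=\begin{pmatrix}0&1\\1&0\end{pmatrix},\] and $\mathrm{Stab}_{\tilde M_E}(v_{0,E})=E^1\rtimes(\mathbb Z/2\mathbb Z\times S_E)$. As subgroups of $GL_2(E)^0\rtimes S_E(F)$ (under the fixed isomorphism $M_E(F)\cong GL_2(E)^0$), this stabilizer equals the group of $F$-automorphisms $\mathrm{Aut}_F(E,C_E,Q,\beta)$ of the twisted composition algebra $C_E=E\oplus E$, $Q(x,y)=xy$, $\beta(x,y)=(y^\#,x^\#)$.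
   Context: $E^1=\{\alpha\in E:N_E(\alpha)=1\}$; $x^\#$ is the adjoint with $xx^\#=N_E(x)$. $GL_2(E)^0=\{g\in GL_2(E):\det g\in F^\times\}$; $S_E(F)=\mathrm{Aut}_F(E)$. $\tilde M_E(F)=GL_2(E)^0\rtimes S_E(F)$ acts on $V_E(F)=F\oplus E\oplus E\oplus F$ (cubes $(a,e,f,b)$) as follows: $\sigma\in S_E(F)$ acts by $(a,e,f,b)\mapsto(a,\sigma e,\sigma f,b)$; $\mathrm{diag}(\alpha,\beta)$ with $\alpha\beta\in F^\times$ acts by $(a,e,f,b)\mapsto(\alpha^\#\beta^{-1}a,\alpha^\#\alpha^{-1}e,\beta^\#\beta^{-1}f,\beta^\#\alpha^{-1}b)$; $w$ acts by $(a,e,f,b)\mapsto(-b,-f,-e,-a)$; the full action is the $F$-form (via Galois descent along $E\otimes\bar F\cong\bar F^3$) of the split action of $(GL_2^3)^0$ on $F^2\otimes F^2\otimes F^2$ by $d^{-1}g_1\otimes g_2\otimes g_3$ ($d$ the common determinant), with $a,b$ the coefficients of $u_1^{\otimes3},u_2^{\otimes3}$, $e_i$ (resp. $f_i$) the coefficient of the basis vector with $u_2$ (resp. $u_1$) in the $i$-th factor and $u_1$ (resp. $u_2$) elsewhere. An $F$-automorphism of $C_E$ is a pair $(\phi,\sigma)$, $\sigma\in\mathrm{Aut}_F(E)$, $\phi$ $F$-linear bijective with $\phi(av)=\sigma(a)\phi(v)$, $\sigma\circ Q=Q\circ\phi$, $\phi\circ\beta=\beta\circ\phi$; it is viewed in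 $GL_2(E)\rtimes S_E(F)$ by writing $\phi$ as an $E$-linear map composed with $\sigma$ acting coordinatewise on $E^2$. *)

From HB Require Import structures.
From mathcomp Require Import all_boot all_order all_algebra all_field.
Set Implicit Arguments. Unset Strict Implicit. Unset Printing Implicit Defensive.
Import GRing.Theory.
Local Open Scope ring_scope.

Section Cubic.
Variables (F : fieldType) (E : falgType F).

Definition lmx (x : E) := passmx.mxof (vbasis {:E}) (vbasis {:E}) (amull x).
(* Norm, trace and second coefficient of the characteristic polynomial:
   char_poly(L_x) = t^3 - T t^2 + S t - N. *)
Definition normE (x : E) : F := \det (lmx x).
Definition traceE (x : E) : F := \tr (lmx x).
Definition secE (x : E) : F := (char_poly (lmx x))`_1.
(* adjoint x^# = x^2 - T(x) x + S(x), so that x x^# = N(x) (Cayley-Hamilton) *)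
Definition adjE (x : E) : E := x ^+ 2 - traceE x *: x + (secE x)%:A.
Definition crossE (x y : E) : E := adjE (x + y) - adjE x - adjE y.

Definition normone (a : E) : Prop := normE a = 1.

Definition GL2_0 (g : 'M[E]_2) : Prop := exists c : F, c != 0 /\ \det g = c%:A.

Definition isFAut (s : E -> E) : Prop :=
  [/\ forall (c : F) x y, s (c *: x + y) = c *: s x + s y,
      s 1 = 1, forall x y, s (x * y) = s x * s y & bijective s].

Definition VE : Type := (F * E * E * F)%type.
Definition v0E : VE := (1, 0, 0, -1).
Definition embV (v : VE) : E * E * E * E :=
  let: (a, e, f, b) := v in (a%:A, e, f, b%:A).

Definition sigmaV (s : E -> E) (v : VE) : VE :=
  let: (a, e, f, b) := v in (a, s e, s f, b).

(* action of g = [[p,q],[r,s]] in GL_2(E)^0 on V_E(F): the F-form of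
   d^{-1} g1 (x) g2 (x) g3, written with the E-operations; the result
   lies in the image of embV, we record it in E^4. *)
Definition actV (g : 'M[E]_2) (v : VE) : E * E * E * E :=
  let: (a, e, f, b) := v in
  let p := g 0 0 in let q := g 0 1 in let r := g 1 0 in let s := g 1 1 in
  let di := (\det g)^-1 in
  ( di * ((normE p * a)%:A + (traceE (adjE p * q * e))%:A
          + (traceE (p * adjE q * f))%:A + (normE q * b)%:A),
    di * (a *: (r * adjE p) + b *: (s * adjE q) + s * adjE p * e
          + r * crossE p (q * e) + r * adjE q * f + s * crossE (p * f) q),
    di * (a *: (p * adjE r) + b *: (q * adjE s) + q * adjE r * e
          + p * crossE (s * e) r + p * adjE s * f + q * crossE (r * f) s),
    di * ((normE r * a)%:A + (traceE (adjE r * s * e))%:A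
          + (traceE (r * adjE s * f))%:A + (normE s * b)%:A) ).

Definition actM (g : 'M[E]_2) (s : E -> E) (v : VE) := actV g (sigmaV s v).

Definition diagE (a : E) : 'M[E]_2 :=
  \matrix_(i, j) (if i == j then (if i == 0 then a else a^-1) else 0).
Definition wE : 'M[E]_2 := \matrix_(i, j) (if i == j then 0 else 1).

Definition QC (v : 'cV[E]_2) : E := v 0 0 * v 1 0.
Definition betaC (v : 'cV[E]_2) : 'cV[E]_2 :=
  \col_i (if i == 0 then adjE (v 1 0) else adjE (v 0 0)).

Definition isAutC (s : E -> E) (phi : 'cV[E]_2 -> 'cV[E]_2) : Prop :=
  isFAut s /\
  (forall u v, phi (u + v) = phi u + phi v) /\
  (forall (c : F) v, phi ((c%:A : E) *: v) = (c%:A : E) *: phi v) /\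
  bijective phi /\
  (forall (a : E) v, phi (a *: v) = s a *: phi v) /\
  (forall v, s (QC v) = QC (phi v)) /\
  (forall v, phi (betaC v) = betaC (phi v)).

(* E is an etale cubic F-algebra: commutative, of dimension 3, and
   E (x)_F L ~= L^3 for an algebraically closed field L over F, i.e. the
   canonical L-algebra map E (x) L -> L^3 given by three F-algebra
   homomorphisms chi_i : E -> L is bijective. *)
Definition alg_hom_over (L : fieldType) (iota : F -> L) (chi : E -> L) : Prop :=
  [/\ chi 1 = 1, forall x y, chi (x * y) = chi x * chi y,
      forall x y, chi (x + y) = chi x + chi y &
      forall (c : F) x, chi (c *: x) = iota c * chi x].

Definition etale_cubic : Prop :=
  [/\ (forall x y : E, x * y = y * x),
      \dim {:E} = 3%N &
      exists (L : closedFieldType) (iota : {rmorphism F -> L})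
             (chi : 'I_3 -> E -> L),
        (forall i, alg_hom_over iota (chi i)) /\
        (\matrix_(i < 3, j < 3) chi i (nth 0 (vbasis {:E}) j)) \in unitmx].

End Cubic.

(* Over an algebraic closure L, the three embeddings chi_i : E -> L identify
   E (x) L with L^3, and the norm, the trace and the adjoint
   x^# = x^2 - T(x) x + S(x) become coordinatewise; hence every polynomial
   identity among them (x x^# = N(x), (x y)^# = x^# y^#, (x^#)^# = N(x) x,
   N multiplicative) can be checked in L.
   For g = [[p, q], [r, t]] with det g = c, the equation g v0 = v0 reads
   N(p) - N(q) = c, r p^# = t q^#, p r^# = q t^#, N(r) - N(t) = -c.
   Applying ^# to the two middle equations gives c p r^# = c r p^# = 0, which
   forces g to be diagonal or antidiagonal with entries a, a^-1 and N(a) = 1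
   (and c = 1 or -1).  An F-automorphism of E preserves the characteristic
   polynomials of multiplication maps, so it commutes with ^#, and it fixes
   v0, so the S_E-part of the stabiliser is unconstrained.  Finally,
   g o sigma preserves Q and beta exactly when p r = q t = 0,
   (p + q) (r + t) = 1, q = r^#, t = p^#, p = t^# and r = q^#, which is again
   the same diagonal/antidiagonal shape. *)

From HB Require Import structures.
From mathcomp Require Import all_boot all_order all_algebra all_field.
From mathcomp Require Import fingroup perm.
From mathcomp Require Import ring.
Import GRing.Theory.
Local Open Scope ring_scope.

Set Implicit Arguments. Unset Strict Implicit. Unset Printing Implicit Defensive.

Lemma ord2P (i : 'I_2) : i = 0 \/ i = 1.
Proof. by case: i => [[|[|k]] hk] //; [left | right]; apply: val_inj. Qed.

Lemma matrix22P (R : Type) m (A B : 'M[R]_(2, m.+1)) :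
  (forall j, A 0 j = B 0 j) -> (forall j, A 1 j = B 1 j) -> A = B.
Proof. by move=> h0 h1; apply/matrixP => i j; case: (ord2P i) => ->. Qed.

Lemma mulmx2E (R : pzRingType) m n (A : 'M[R]_(m, 2)) (B : 'M[R]_(2, n)) i j :
  (A *m B) i j = A i 0 * B 0 j + A i 1 * B 1 j.
Proof.
rewrite mxE !big_ord_recl big_ord0 addr0.
by congr (A i _ * B _ j + A i _ * B _ j); apply: val_inj.
Qed.

Lemma perm2P (s : 'S_2) : s = 1%g \/ s = tperm 0 1.
Proof.
have [s0 | s0] := ord2P (s 0); [left | right]; apply/permP => i; rewrite ?perm1;
  case: (ord2P i) => ->; rewrite ?tpermL ?tpermR ?s0 //;
  by case: (ord2P (s 1)) => // s1; move: s0; rewrite -s1 => /perm_inj.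
Qed.

Lemma det_mx22 (R : pzRingType) (A : 'M[R]_2) :
  \det A = A 0 0 * A 1 1 - A 0 1 * A 1 0.
Proof.
have tperm_neq1 : tperm (0 : 'I_2) 1 != 1%g.
  by apply/eqP => /permP /(_ 0); rewrite tpermL perm1.
rewrite /determinant (bigD1 1%g) // (bigD1 (tperm 0 1)) //=.
rewrite [X in _ + (_ + X)]big1 ?addr0; last first.
  by move=> s; case: (perm2P s) => ->; rewrite eqxx ?andbF.
rewrite odd_perm1 odd_tperm /= !big_ord_recl !big_ord0 /= !perm1.
have -> : lift ord0 ord0 = 1 :> 'I_2 by apply: val_inj.
have -> : ord0 = 0 :> 'I_2 by apply: val_inj.
by rewrite tpermR tpermL expr0 expr1 !mul1r !mulr1 mulN1r.
Qed.

Lemma char_poly_trmx (R : comNzRingType) n (A : 'M[R]_n) :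
  char_poly A^T = char_poly A.
Proof.
by rewrite /char_poly -det_tr /char_poly_mx linearB /= tr_scalar_mx -map_trmx trmxK.
Qed.

Lemma char_poly_similar (R : fieldType) n (V A B : 'M[R]_n) :
  V \in unitmx -> V *m A = B *m V -> char_poly A = char_poly B.
Proof.
move=> uV hVA; have -> : A = invmx V *m B *m V by rewrite -mulmxA -hVA mulKmx.
have hX : map_mx polyC (invmx V) *m 'X%:M *m map_mx polyC V = 'X%:M.
  by rewrite -mulmxA mul_scalar_mx -scalemxAr -map_mxM mulVmx // map_mx1 scalemx1.
rewrite /char_poly /char_poly_mx -{1}hX !map_mxM -mulmxBl -mulmxBr !det_mulmx.
by rewrite !det_map_mx mulrC mulrA -rmorphM -det_mulmx mulmxV // det1 rmorph1 mul1r.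
Qed.

Lemma unitmx_cast_ord (R : comUnitRingType) m n (hn : n = m)
    (h : 'I_m -> nat -> R) :
  (\matrix_(i < m, j < m) h i j) \in unitmx ->
  (\matrix_(i < n, j < n) h (cast_ord hn i) j) \in unitmx.
Proof.
subst n.
by congr (_ \in unitmx); apply/matrixP => i j; rewrite !mxE cast_ord_id.
Qed.

Lemma big_cast_ord (R : Type) (idx : R) (op : R -> R -> R) m n (hn : n = m)
    (f : 'I_m -> R) :
  \big[op/idx]_(i < n) f (cast_ord hn i) = \big[op/idx]_(i < m) f i.
Proof. by subst n; apply: eq_bigr => i _; rewrite cast_ord_id. Qed.

Lemma ord3_ind (P : 'I_3 -> Prop) : P 0 -> P 1 -> P 2 -> forall i, P i.
Proof.
move=> h0 h1 h2 [[|[|[|k]]] hk] //.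
- by have -> : Ordinal hk = 0 by apply/val_inj.
- by have -> : Ordinal hk = 1 by apply/val_inj.
- by have -> : Ordinal hk = 2 by apply/val_inj.
Qed.

Lemma sqr_eq_cube (R : idomainType) (c d : R) :
  c != 0 -> c ^+ 2 = d * c ^+ 3 -> d * c = 1.
Proof.
by move=> c0 h; apply: (mulfI (expf_neq0 2 c0)); rewrite mulr1 [RHS]h; ring.
Qed.

Lemma coef_cubic (R : comNzRingType) (a b c : R) :
  let P := ('X - a%:P) * ('X - b%:P) * ('X - c%:P) in
  [/\ P`_0 = - (a * b * c), P`_1 = a * b + b * c + c * a & P`_2 = - (a + b + c)].
Proof.
have -> : ('X - a%:P) * ('X - b%:P) * ('X - c%:P) =
  'X^3 - (a + b + c)%:P * 'X^2 + (a * b + b * c + c * a)%:P * 'X - (a * b * c)%:P.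
  by rewrite !rmorphD !rmorphM /=; ring.
by split; rewrite !coefE /=; ring.
Qed.

Lemma scaler_eq0_nz (R : fieldType) (V : lmodType R) (c : R) (v : V) :
  c != 0 -> c *: v = 0 -> v = 0.
Proof. by move=> c0 /eqP; rewrite scaler_eq0 (negPf c0) => /eqP. Qed.

Lemma alg_inj (F : fieldType) (E : falgType F) (c d : F) : c%:A = d%:A :> E -> c = d.
Proof. exact: (fmorph_inj (in_alg E)). Qed.

(** * Automorphisms of a finite-dimensional algebra commute with the adjoint *)

Section FAlgAut.
Variables (F : fieldType) (E : falgType F) (s : E -> E).
Hypothesis hs : isFAut s.
Implicit Types x y : E.

Lemma aut_linear : linear s. Proof. by case: hs. Qed.

Definition aut_lin : {linear E -> E} :=
  HB.pack s (GRing.isSemilinear.Build F E E _ s (GRing.semilinear_linear aut_linear)).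

Lemma autD x y : s (x + y) = s x + s y. Proof. exact: (linearD aut_lin). Qed.
Lemma autB x y : s (x - y) = s x - s y. Proof. exact: (linearB aut_lin). Qed.
Lemma autZ c x : s (c *: x) = c *: s x. Proof. exact: (linearZZ aut_lin). Qed.
Lemma aut0 : s 0 = 0. Proof. exact: (linear0 aut_lin). Qed.
Lemma autM x y : s (x * y) = s x * s y. Proof. by case: hs. Qed.
Lemma aut1 : s 1 = 1. Proof. by case: hs. Qed.
Lemma aut_alg c : s c%:A = c%:A. Proof. by rewrite autZ aut1. Qed.

Lemma sigmaV_v0 : sigmaV s (v0E E) = v0E E.
Proof. by rewrite /sigmaV /v0E aut0. Qed.

Lemma aut_inv : exists2 sv : {linear E -> E}, cancel s sv & cancel sv s.
Proof.
have [sv sK svK] : bijective s by case: hs.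
have sv_linear : linear sv.
  by move=> c x y; apply: (can_inj sK); rewrite aut_linear !svK.
pose svL : {linear E -> E} :=
  HB.pack sv (GRing.isSemilinear.Build F E E _ sv (GRing.semilinear_linear sv_linear)).
by exists svL.
Qed.

Local Notation B := (vbasis {:E}).

Definition aut_mx := passmx.mxof B B (linfun aut_lin).

Lemma aut_mx_unit : aut_mx \in unitmx.
Proof.
have [sv sK svK] := aut_inv.
suff /mulmx1_unit [] : aut_mx *m passmx.mxof B B (linfun sv) = 1%:M by [].
rewrite -passmx.mxof_comp ?vbasisP // -(passmx.mxof1 (basis_free (vbasisP _))).
by congr passmx.mxof; apply/lfunP => x; rewrite comp_lfunE !lfunE /= sK.
Qed.

Lemma lmx_aut x : lmx x *m aut_mx = aut_mx *m lmx (s x).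
Proof.
rewrite /lmx /aut_mx -!passmx.mxof_comp ?vbasisP //; congr passmx.mxof.
apply/lfunP => y; rewrite !comp_lfunE !(lfunE aut_lin) !lfunE /=.
exact: autM.
Qed.

Lemma traceE_aut x : traceE (s x) = traceE x.
Proof.
rewrite /traceE -(mulKmx aut_mx_unit (lmx (s x))) -lmx_aut mulmxA.
by rewrite mxtrace_mulC mulmxA mulmxV ?aut_mx_unit // mul1mx.
Qed.

Lemma secE_aut x : secE (s x) = secE x.
Proof. by rewrite /secE (char_poly_similar aut_mx_unit (esym (lmx_aut x))). Qed.

Lemma adjE_aut x : s (adjE x) = adjE (s x).
Proof. by rewrite /adjE autD autB expr2 autM autZ aut_alg traceE_aut secE_aut -expr2. Qed.

End FAlgAut.

(** * An etale cubic algebra through its geometric points *)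

Section EtaleCubic.
Variables (F : fieldType) (E : falgType F).
Hypothesis hdim : \dim {:E} = 3%N.
Variables (L : closedFieldType) (iota : {rmorphism F -> L}) (chi : 'I_3 -> E -> L).
Hypothesis hchi : forall i, alg_hom_over iota (chi i).
Hypothesis hM : (\matrix_(i < 3, j < 3) chi i (nth 0 (vbasis {:E}) j)) \in unitmx.
Implicit Types (a x y p q r t : E) (g : 'M[E]_2) (i : 'I_3).

Local Notation B := (vbasis {:E}).
Local Notation n := (\dim {:E}).

Lemma chi1 i : chi i 1 = 1. Proof. by case: (hchi i). Qed.
Lemma chiM i x y : chi i (x * y) = chi i x * chi i y. Proof. by case: (hchi i). Qed.
Lemma chiD i x y : chi i (x + y) = chi i x + chi i y. Proof. by case: (hchi i). Qed.
Lemma chiZ i c x : chi i (c *: x) = iota c * chi i x. Proof. by case: (hchi i). Qed.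
Lemma chi0 i : chi i 0 = 0.
Proof. by rewrite -(scale0r (0 : E)) chiZ rmorph0 mul0r. Qed.
Lemma chiN i x : chi i (- x) = - chi i x.
Proof. by rewrite -scaleN1r chiZ rmorphN1 mulN1r. Qed.
Lemma chiB i x y : chi i (x - y) = chi i x - chi i y.
Proof. by rewrite chiD chiN. Qed.
Lemma chiA i c : chi i c%:A = iota c.
Proof. by rewrite chiZ chi1 mulr1. Qed.
Lemma chiX i x k : chi i (x ^+ k) = chi i x ^+ k.
Proof. by elim: k => [|k IH]; rewrite ?chi1 // !exprS chiM IH. Qed.

(* [vbasis {:E}] is indexed by ['I_n] while the etale hypothesis uses ['I_3]. *)
Definition chi_mx : 'M[L]_n := \matrix_(i, j) chi (cast_ord hdim i) (nth 0 B j).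

Lemma chi_mx_unit : chi_mx \in unitmx.
Proof.
exact: (unitmx_cast_ord hdim (h := fun i j => chi i (nth 0 B j)) hM).
Qed.

Lemma chi_coord i y : chi i y = \sum_k iota (coord B k y) * chi i B`_k.
Proof.
rewrite {1}(coord_vbasis (memvf y)) (big_morph _ (chiD _) (chi0 _)).
by apply: eq_bigr => k _; rewrite chiZ.
Qed.

Lemma chi_mx_coord x :
  chi_mx *m \col_j iota (coord B j x) = \col_i chi (cast_ord hdim i) x.
Proof.
apply/colP => i; rewrite !mxE chi_coord.
by apply: eq_bigr => j _; rewrite !mxE mulrC.
Qed.

Lemma chi_inj x y : (forall i, chi i x = chi i y) -> x = y.
Proof.
move=> hxy; apply/eqP; rewrite -subr_eq0; apply/eqP.
have hc : \col_j iota (coord B j (x - y)) = 0.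
  apply: (can_inj (mulKmx chi_mx_unit)); rewrite chi_mx_coord mulmx0.
  by apply/colP => i; rewrite !mxE chiB hxy subrr.
rewrite (coord_vbasis (memvf (x - y))); apply: big1 => j _.
move/colP: hc => /(_ j); rewrite !mxE -(rmorph0 iota) => /fmorph_inj ->.
by rewrite scale0r.
Qed.

Lemma coord_mul_vbasis x (j k : 'I_n) : coord B k (x * B`_j) = lmx x j k.
Proof.
have -> : x * B`_j = amull x B`_j by rewrite lfunE.
rewrite passmx.coord_rVof (passmx.rVof_app _ (vbasisP _)).
by rewrite (passmx.rVofE (vbasisP _)) -rowE mxE.
Qed.

Lemma chi_mx_lmx x :
  chi_mx *m (map_mx iota (lmx x))^T = diag_mx (\row_i chi (cast_ord hdim i) x) *m chi_mx.
Proof.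
apply/matrixP => i j; rewrite mul_diag_mx !mxE -chiM (chi_coord (cast_ord hdim i)).
by apply: eq_bigr => k _; rewrite coord_mul_vbasis mulrC !mxE.
Qed.

Lemma char_poly_lmx x : map_poly iota (char_poly (lmx x)) =
  ('X - (chi 0 x)%:P) * ('X - (chi 1 x)%:P) * ('X - (chi 2 x)%:P).
Proof.
rewrite map_char_poly -char_poly_trmx.
rewrite (char_poly_similar chi_mx_unit (chi_mx_lmx x)).
rewrite char_poly_trig ?diag_mx_is_trig //.
under eq_bigr do rewrite !mxE eqxx mulr1n.
rewrite (big_cast_ord _ _ hdim (fun i => 'X - (chi i x)%:P)) !big_ord_recr big_ord0 /= mul1r.
by congr (('X - (chi _ x)%:P) * ('X - (chi _ x)%:P) * ('X - (chi _ x)%:P));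
  apply: val_inj.
Qed.

Lemma normE_chi x : iota (normE x) = chi 0 x * chi 1 x * chi 2 x.
Proof.
have := congr1 (fun p : {poly L} => p`_0) (char_poly_lmx x).
case: (coef_cubic (chi 0 x) (chi 1 x) (chi 2 x)) => /= -> _ _.
have sign3 : (-1 : F) ^+ n = -1 by rewrite hdim -signr_odd.
rewrite coef_map /= char_poly_det sign3 mulN1r rmorphN.
by move/oppr_inj.
Qed.

Lemma traceE_chi x : iota (traceE x) = chi 0 x + chi 1 x + chi 2 x.
Proof.
have := congr1 (fun p : {poly L} => p`_2) (char_poly_lmx x).
case: (coef_cubic (chi 0 x) (chi 1 x) (chi 2 x)) => /= _ _ ->.
have coef2 : (char_poly (lmx x))`_2 = - traceE x.
  have h2 : 2%N = n.-1 by rewrite hdim.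
  by rewrite h2 char_poly_trace ?hdim.
by rewrite coef_map /= coef2 rmorphN => /oppr_inj.
Qed.

Lemma secE_chi x :
  iota (secE x) = chi 0 x * chi 1 x + chi 1 x * chi 2 x + chi 2 x * chi 0 x.
Proof.
have := congr1 (fun p : {poly L} => p`_1) (char_poly_lmx x).
by case: (coef_cubic (chi 0 x) (chi 1 x) (chi 2 x)) => /= _ -> _; rewrite coef_map.
Qed.

Lemma chi_adjE i x : chi i (adjE x) =
  chi i x ^+ 2 - (chi 0 x + chi 1 x + chi 2 x) * chi i x
  + (chi 0 x * chi 1 x + chi 1 x * chi 2 x + chi 2 x * chi 0 x).
Proof. by rewrite /adjE chiD chiB chiX chiZ chiA traceE_chi secE_chi. Qed.

Lemma mulEC x y : x * y = y * x.
Proof. by apply: chi_inj => i; rewrite !chiM mulrC. Qed.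

(* Identities in E are checked in L^3, where x |-> (chi_i x)_i is injective. *)
Ltac chi_ring := apply: chi_inj; elim/ord3_ind;
  rewrite ?(chiD, chiB, chiN, chiM, chiZ, chiA, chi1, chi0, chiX, chi_adjE, normE_chi);
  ring.

Lemma adjE0 : adjE (0 : E) = 0. Proof. chi_ring. Qed.
Lemma adjE1 : adjE (1 : E) = 1. Proof. chi_ring. Qed.
Lemma adjEM x y : adjE (x * y) = adjE x * adjE y. Proof. chi_ring. Qed.
Lemma mul_adjE x : x * adjE x = (normE x)%:A. Proof. chi_ring. Qed.
Lemma adjEK x : adjE (adjE x) = normE x *: x. Proof. chi_ring. Qed.

Ltac norm_ring := apply: (fmorph_inj iota);
  rewrite ?(rmorphM, rmorphD, rmorphB, rmorphN, rmorph1, rmorph0, rmorphXn) /=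
    ?(normE_chi, traceE_chi, chiD, chiB, chiN, chiM, chiZ, chiA, chi1, chi0, chiX, chi_adjE);
  ring.

Lemma normEM x y : normE (x * y) = normE x * normE y. Proof. norm_ring. Qed.
Lemma normE_alg c : normE (c%:A : E) = c ^+ 3. Proof. norm_ring. Qed.
Lemma normE_adjE x : normE (adjE x) = normE x ^+ 2. Proof. norm_ring. Qed.
Lemma normE0 : normE (0 : E) = 0. Proof. norm_ring. Qed.
Lemma normE1 : normE (1 : E) = 1. Proof. norm_ring. Qed.
Lemma traceE0 : traceE (0 : E) = 0. Proof. norm_ring. Qed.

Lemma unitE x : (x \is a GRing.unit) = (normE x != 0).
Proof.
apply/idP/idP => [ux | nx].
  apply/eqP => n0; have := normEM x x^-1.
  by rewrite mulrV // normE1 n0 mul0r => /eqP; rewrite oner_eq0.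
apply/unitrP; exists ((normE x)^-1 *: adjE x).
have h : x * ((normE x)^-1 *: adjE x) = 1.
  by rewrite -scalerAr mul_adjE scalerA mulVf // scale1r.
by split; rewrite // mulEC.
Qed.

Lemma norm_scale_eq0 x y : x * adjE y = 0 -> normE y *: x = 0.
Proof. by move=> h; rewrite -mulr_algr -mul_adjE mulEC mulrA h mul0r. Qed.

Lemma normone_mulr_eq1 x y : normE x = 1 -> x * y = 1 -> y = adjE x.
Proof.
move=> nx xy; have ux : x \is a GRing.unit by rewrite unitE nx oner_eq0.
by apply: (mulrI ux); rewrite xy mul_adjE nx scale1r.
Qed.

Lemma adjE_normone x : normE x = 1 -> adjE (adjE x) = x.
Proof. by move=> nx; rewrite adjEK nx scale1r. Qed.

(** * The stabiliser of v0 *)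

(* The entries [[p, q], [r, t]] of diag(a, a^-1) or diag(a, a^-1) w, N(a) = 1. *)
Definition monomial_E1 (p q r t : E) : Prop :=
  (normE p = 1 /\ q = 0 /\ r = 0 /\ p * t = 1) \/
  (normE q = 1 /\ p = 0 /\ t = 0 /\ q * r = 1).

Definition in_E1w (g : 'M[E]_2) : Prop :=
  exists a : E, normone a /\ (g = diagE a \/ g = diagE a *m wE E).

Lemma in_E1wE g : in_E1w g <-> monomial_E1 (g 0 0) (g 0 1) (g 1 0) (g 1 1).
Proof.
have diagE_entries (a : E) :
    [/\ diagE a 0 0 = a, diagE a 0 1 = 0, diagE a 1 0 = 0 & diagE a 1 1 = a^-1].
  by rewrite !mxE.
have diagw_entries (a : E) : let h := diagE a *m wE E in
    [/\ h 0 0 = 0, h 0 1 = a, h 1 0 = a^-1 & h 1 1 = 0].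
  by split; rewrite mulmx2E !mxE /= ?mulr0 ?mul0r ?mulr1 ?addr0 ?add0r.
split.
- move=> [a [na [-> | ->]]]; have ua : a \is a GRing.unit by rewrite unitE na oner_eq0.
  + by left; case: (diagE_entries a) => -> -> -> ->; rewrite mulrV.
  + by right; case: (diagw_entries a) => -> -> -> ->; rewrite mulrV.
- case=> [[np [q0 [r0 pt]]] | [nq [p0 [t0 qr]]]].
  + have up : g 0 0 \is a GRing.unit by rewrite unitE np oner_eq0.
    exists (g 0 0); split=> //; left.
    case: (diagE_entries (g 0 0)) => e00 e01 e10 e11.
    apply: matrix22P => j; case: (ord2P j) => ->; rewrite ?e00 ?e01 ?e10 ?e11 //.
    by apply: (mulrI up); rewrite pt mulrV.
  + have uq : g 0 1 \is a GRing.unit by rewrite unitE nq oner_eq0.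
    exists (g 0 1); split=> //; right.
    case: (diagw_entries (g 0 1)) => e00 e01 e10 e11.
    apply: matrix22P => j; case: (ord2P j) => ->; rewrite ?e00 ?e01 ?e10 ?e11 //.
    by apply: (mulrI uq); rewrite qr mulrV.
Qed.

Lemma actV_v0 (g : 'M[E]_2) : actV g (v0E E) =
  ((\det g)^-1 * (normE (g 0 0) - normE (g 0 1))%:A,
   (\det g)^-1 * (g 1 0 * adjE (g 0 0) - g 1 1 * adjE (g 0 1)),
   (\det g)^-1 * (g 0 0 * adjE (g 1 0) - g 0 1 * adjE (g 1 1)),
   (\det g)^-1 * (normE (g 1 0) - normE (g 1 1))%:A).
Proof.
have cross0r x : crossE x 0 = 0 by rewrite /crossE addr0 adjE0 subr0 subrr.
have cross0l x : crossE 0 x = 0 by rewrite /crossE add0r adjE0 subr0 subrr.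
rewrite /actV /v0E /=; congr (_ * _, _ * _, _ * _, _ * _).
- by rewrite !mulr0 !traceE0 !scale0r !addr0 mulr1 mulrN1 scalerBl scaleNr.
- by rewrite !mulr0 !(cross0r, cross0l) !mulr0 !addr0 scale1r scaleN1r.
- by rewrite !mulr0 !(cross0r, cross0l) !mulr0 !addr0 scale1r scaleN1r.
- by rewrite !mulr0 !traceE0 !scale0r !addr0 mulr1 mulrN1 scalerBl scaleNr.
Qed.

Lemma adj_cross_eq0 p q r t c : c != 0 -> normE p - normE q = c ->
  r * adjE p = t * adjE q -> p * adjE r = q * adjE t -> p * adjE r = 0.
Proof.
move=> c0 hpq hrp hpr.
have : adjE r * adjE (adjE p) = adjE t * adjE (adjE q) by rewrite -!adjEM hrp.
rewrite !adjEK -!scalerAr (mulEC (adjE r)) (mulEC (adjE t)) -hpr => h.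
by apply: (scaler_eq0_nz c0); rewrite -hpq scalerBl h subrr.
Qed.

Lemma stab_v0_monomial p q r t c : c != 0 -> p * t - q * r = c%:A ->
  normE p - normE q = c -> r * adjE p = t * adjE q -> p * adjE r = q * adjE t ->
  normE r - normE t = - c -> monomial_E1 p q r t.
Proof.
move=> c0 hdet hpq hrp hpr hrt; have mc0 : - c != 0 by rewrite oppr_eq0.
have pr0 : p * adjE r = 0 := adj_cross_eq0 c0 hpq hrp hpr.
have rp0 : r * adjE p = 0 := adj_cross_eq0 mc0 hrt hpr hrp.
have /norm_scale_eq0 Nr_p := pr0; have /norm_scale_eq0 Np_r := rp0.
have /norm_scale_eq0 Nt_q : q * adjE t = 0 by rewrite -hpr.
have /norm_scale_eq0 Nq_t : t * adjE q = 0 by rewrite -hrp.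
have [np0 | np0] := eqVneq (normE p) 0.
- have nq : normE q = - c by rewrite -hpq np0 sub0r opprK.
  have t0 : t = 0 by apply: (scaler_eq0_nz mc0); rewrite -nq.
  have nr : normE r = - c by rewrite -hrt t0 normE0 subr0.
  have p0 : p = 0 by apply: (scaler_eq0_nz mc0); rewrite -nr.
  have qr : q * r = (- c)%:A by rewrite scaleNr -hdet p0 mul0r sub0r opprK.
  have : (- c) ^+ 2 = 1 * (- c) ^+ 3.
    by rewrite mul1r -normE_alg -qr normEM nq nr expr2.
  move/(sqr_eq_cube mc0); rewrite mul1r => c1.
  by right; rewrite nq qr c1 scale1r.
- have r0 : r = 0 by apply: (scaler_eq0_nz np0).
  have pt : p * t = c%:A by rewrite -hdet r0 mulr0 subr0.
  have nt : normE t = c by apply: oppr_inj; rewrite -hrt r0 normE0 sub0r.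
  have q0 : q = 0 by apply: (scaler_eq0_nz _ Nt_q); rewrite nt.
  have np : normE p = c by rewrite -hpq q0 normE0 subr0.
  have : c ^+ 2 = 1 * c ^+ 3 by rewrite mul1r -normE_alg -pt normEM np nt expr2.
  move/(sqr_eq_cube c0); rewrite mul1r => c1.
  by left; rewrite np pt c1 scale1r.
Qed.

Lemma stab_v0E g : GL2_0 g /\ actV g (v0E E) = embV (v0E E) <->
  monomial_E1 (g 0 0) (g 0 1) (g 1 0) (g 1 1).
Proof.
rewrite actV_v0 /embV /v0E /=; split.
- case=> [[c [c0 hdet]] [h1 h2 h3 h4]].
  have udet : \det g \is a GRing.unit by rewrite hdet unitE normE_alg expf_neq0.
  have cancel_det X Y : (\det g)^-1 * X = Y -> X = \det g * Y by move=> <-; rewrite mulVKr.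
  move/cancel_det: h1; rewrite hdet scale1r mulr1 => /alg_inj h1.
  move/cancel_det: h2; rewrite mulr0 => /eqP; rewrite subr_eq0 => /eqP h2.
  move/cancel_det: h3; rewrite mulr0 => /eqP; rewrite subr_eq0 => /eqP h3.
  move/cancel_det: h4; rewrite hdet mulr_algl scalerA mulrN1 => /alg_inj h4.
  by apply: (stab_v0_monomial c0 _ h1 h2 h3 h4); rewrite -det_mx22.
- have normE_inv x y : normE x = 1 -> x * y = 1 -> normE y = 1.
    by move=> nx /(congr1 (@normE _ E)); rewrite normEM nx mul1r normE1.
  case=> [[np [q0 [r0 pt]]] | [nq [p0 [t0 qr]]]].
  + have det1 : \det g = 1%:A by rewrite det_mx22 q0 r0 mulr0 subr0 pt scale1r.
    split; first by exists 1; rewrite oner_eq0 det1.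
    rewrite det1 scale1r invr1 !mul1r q0 r0 adjE0 normE0 (normE_inv _ _ np pt) np.
    by rewrite !(mulr0, mul0r, subr0, sub0r, subrr, oppr0, scale1r).
  + have detN1 : \det g = (-1)%:A by rewrite det_mx22 p0 t0 mul0r sub0r qr scaleN1r.
    split; first by exists (-1); rewrite oppr_eq0 oner_eq0 detN1.
    rewrite detN1 scaleN1r invrN1 !mulN1r p0 t0 adjE0 normE0 (normE_inv _ _ nq qr) nq.
    by rewrite !(mulr0, mul0r, subr0, sub0r, subrr, oppr0) scaleN1r opprK scale1r.
Qed.

Lemma stabV_v0 g : GL2_0 g /\ actV g (v0E E) = embV (v0E E) <-> in_E1w g.
Proof. by rewrite stab_v0E in_E1wE. Qed.

Lemma diagE_mulV a : a \is a GRing.unit -> diagE a *m diagE a^-1 = 1%:M.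
Proof.
move=> ua; apply: matrix22P => j; case: (ord2P j) => ->;
  by rewrite mulmx2E !mxE /= ?(mulr0, mul0r, addr0, add0r, invrK, divrr ua, mulVr ua).
Qed.

Lemma wE_mulmx_wE : wE E *m wE E = 1%:M.
Proof.
apply: matrix22P => j; case: (ord2P j) => ->;
  by rewrite mulmx2E !mxE /= ?(mulr0, mul0r, mulr1, addr0, add0r).
Qed.

Lemma in_E1w_invertible g : in_E1w g -> exists2 h, h *m g = 1%:M & g *m h = 1%:M.
Proof.
case=> a [na hg]; have ua : a \is a GRing.unit by rewrite unitE na oner_eq0.
have Dinv : diagE a^-1 *m diagE a = 1%:M.
  by rewrite -{2}(invrK a) diagE_mulV // unitrV.
have [-> | ->] := hg; first by exists (diagE a^-1); rewrite ?diagE_mulV.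
exists (wE E *m diagE a^-1).
  by rewrite mulmxA -(mulmxA (wE E)) Dinv mulmx1 wE_mulmx_wE.
by rewrite mulmxA -(mulmxA (diagE a)) wE_mulmx_wE mulmx1 diagE_mulV.
Qed.

(** * Automorphisms of the twisted composition algebra *)

Lemma monomial_E1P p q r t : monomial_E1 p q r t <->
  [/\ p * r = 0, q * t = 0 & (p + q) * (r + t) = 1] /\
  [/\ q = adjE r, t = adjE p, p = adjE t & r = adjE q].
Proof.
split.
- case=> [[np [-> [-> pt]]] | [nq [-> [-> qr]]]].
  + have tp := normone_mulr_eq1 np pt.
    by rewrite mulr0 mul0r addr0 add0r pt adjE0 tp adjE_normone.
  + have rq := normone_mulr_eq1 nq qr.
    by rewrite mul0r mulr0 add0r addr0 qr adjE0 rq adjE_normone.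
- case=> [[pr0 qt0 h1] [qr tp pt rq]].
  have hpt : p * t = (normE p)%:A by rewrite tp mul_adjE.
  have hqr : q * r = (normE r)%:A by rewrite qr mulEC mul_adjE.
  have sum1 : normE p + normE r = 1.
    apply: (alg_inj (E := E)); rewrite scalerDl scale1r -hpt -hqr -h1.
    by rewrite mulrDl !mulrDr pr0 qt0 add0r addr0.
  have [np0 | np0] := eqVneq (normE p) 0.
  + have p0 : p = 0 by rewrite pt tp adjEK np0 scale0r.
    have nr : normE r = 1 by rewrite -sum1 np0 add0r.
    right; rewrite qr normE_adjE nr expr1n -qr hqr nr scale1r.
    by rewrite tp p0 adjE0.
  + have up : p \is a GRing.unit by rewrite unitE.
    have r0 : r = 0 by apply: (mulrI up); rewrite pr0 mulr0.
    have np : normE p = 1 by rewrite -sum1 r0 normE0 addr0.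
    by left; rewrite hpt np qr r0 adjE0 scale1r.
Qed.

Definition col2 x y : 'cV[E]_2 := \col_i (if i == 0 then x else y).

Lemma col2_eta (v : 'cV[E]_2) : v = col2 (v 0 0) (v 1 0).
Proof. by apply: matrix22P => j; rewrite (ord1 j) !mxE. Qed.

Lemma col2_inj x y x' y' : col2 x y = col2 x' y' -> x = x' /\ y = y'.
Proof. by move=> /matrixP h; move: (h 0 0) (h 1 0); rewrite !mxE. Qed.

Lemma scale_col2 a x y : a *: col2 x y = col2 (a * x) (a * y).
Proof. by apply: matrix22P => j; rewrite !mxE. Qed.

Lemma QC_col2 x y : QC (col2 x y) = x * y.
Proof. by rewrite /QC !mxE. Qed.

Lemma betaC_col2 x y : betaC (col2 x y) = col2 (adjE y) (adjE x).
Proof. by apply: matrix22P => j; rewrite !mxE. Qed.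

Section TwistedCompositionAut.
Variable s : E -> E.
Hypothesis hs : isFAut s.

Lemma mul_map_col2 g x y : g *m map_mx s (col2 x y) =
  col2 (g 0 0 * s x + g 0 1 * s y) (g 1 0 * s x + g 1 1 * s y).
Proof. by apply: matrix22P => j; rewrite mulmx2E !mxE. Qed.

Lemma isAutC_monomial g : isAutC s (fun v => g *m map_mx s v) ->
  monomial_E1 (g 0 0) (g 0 1) (g 1 0) (g 1 1).
Proof.
case=> _ [_ [_ [_ [_ [hQ hB]]]]]; apply/monomial_E1P.
have := hQ (col2 1 0); have := hQ (col2 0 1); have := hQ (col2 1 1).
have := hB (col2 1 0); have := hB (col2 0 1).
rewrite !betaC_col2 !mul_map_col2 !betaC_col2 !QC_col2 adjE0 adjE1.
rewrite !(aut0 hs, aut1 hs, mulr0, mul0r, mulr1, mul1r, addr0, add0r).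
by case/col2_inj=> pt rq /col2_inj [qr tp] h1 qt0 pr0.
Qed.

Lemma mul_map_bijective g h : h *m g = 1%:M -> g *m h = 1%:M ->
  bijective (fun v : 'cV[E]_2 => g *m map_mx s v).
Proof.
move=> hg gh; have [sv sK svK] := aut_inv hs.
exists (fun w => map_mx sv (h *m w)) => v.
  by rewrite mulmxA hg mul1mx; apply/matrixP => i j; rewrite !mxE sK.
have -> : map_mx s (map_mx sv (h *m v)) = h *m v.
  by apply/matrixP => i j; rewrite !mxE svK.
by rewrite mulmxA gh mul1mx.
Qed.

Lemma in_E1w_isAutC g : in_E1w g -> isAutC s (fun v => g *m map_mx s v).
Proof.
move=> hg; have /in_E1wE hm := hg.
have [[pr0 qt0 h1] [qr tp pt rq]] := iffLR (monomial_E1P _ _ _ _) hm.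
have semilin a (v : 'cV[E]_2) : g *m map_mx s (a *: v) = s a *: (g *m map_mx s v).
  rewrite (col2_eta v) scale_col2 !mul_map_col2 scale_col2 !(autM hs).
  by congr col2; chi_ring.
split; first exact: hs.
split.
  move=> u v; rewrite -mulmxDr; congr (_ *m _).
  by apply/matrixP => i j; rewrite !mxE (autD hs).
split; first by move=> c v; rewrite semilin (aut_alg hs).
split; first by have [h hg' gh] := in_E1w_invertible hg; exact: mul_map_bijective hg' gh.
split; first exact: semilin.
split.
  move=> v; rewrite (col2_eta v) mul_map_col2 !QC_col2 (autM hs).
  set X := s (v 0 0); set Y := s (v 1 0).
  have -> : (g 0 0 * X + g 0 1 * Y) * (g 1 0 * X + g 1 1 * Y) =
    g 0 0 * g 1 0 * (X * X) + g 0 1 * g 1 1 * (Y * Y)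
    + ((g 0 0 + g 0 1) * (g 1 0 + g 1 1) - g 0 0 * g 1 0 - g 0 1 * g 1 1) * (X * Y).
    by chi_ring.
  by rewrite pr0 qt0 h1 !mul0r !add0r !subr0 mul1r.
move=> v; rewrite (col2_eta v) betaC_col2 !mul_map_col2 betaC_col2 !(adjE_aut hs).
case: hm => [[_ [q0 [r0 _]]] | [_ [p0 [t0 _]]]].
  by rewrite q0 r0 !mul0r !addr0 !add0r !adjEM -pt -tp.
by rewrite p0 t0 !mul0r !addr0 !add0r !adjEM -qr -rq.
Qed.

Lemma isAutC_E1w g : isAutC s (fun v => g *m map_mx s v) <-> in_E1w g.
Proof. by split=> [/isAutC_monomial /in_E1wE | /in_E1w_isAutC]. Qed.

End TwistedCompositionAut.

End EtaleCubic.

Theorem proposition7p1 (F : fieldType) (E : falgType F)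
  (hchar : (2%:R : F) != 0 /\ (3%:R : F) != 0)
  (hE : etale_cubic E) :
  (forall g : 'M[E]_2,
     (GL2_0 g /\ actV g (v0E E) = embV (v0E E)) <->
     exists a : E, normone a /\ (g = diagE a \/ g = diagE a *m wE E))
  /\
  (forall (g : 'M[E]_2) (s : E -> E), isFAut s ->
     ((GL2_0 g /\ actM g s (v0E E) = embV (v0E E)) <->
      exists a : E, normone a /\ (g = diagE a \/ g = diagE a *m wE E)))
  /\
  (forall (g : 'M[E]_2) (s : E -> E), isFAut s ->
     ((GL2_0 g /\ actM g s (v0E E) = embV (v0E E)) <->
      isAutC s (fun v : 'cV[E]_2 => g *m map_mx s v))).
Proof.
have [_ hdim [L [iota [chi [hchi hM]]]]] := hE.
have stabM g : GL2_0 g /\ actV g (v0E E) = embV (v0E E) <-> in_E1w g :=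
  stabV_v0 hdim hchi hM g.
have stabMt g s : isFAut s ->
    (GL2_0 g /\ actM g s (v0E E) = embV (v0E E) <-> in_E1w g).
  by move=> hs; rewrite /actM sigmaV_v0.
split; first exact: stabM.
split; first exact: stabMt.
by move=> g s hs; rewrite stabMt // isAutC_E1w.
Qed.
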